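(* For every integer $d\geqslant 2$, $n(d-1,d)=3\cdot 2^{d-2}$.
   Context: A standard box in $\mathbb{R}^d$ is a set $K=K_1\times\cdots\times K_d$ where each $K_i\subset\mathbb{R}$ is a closed interval. For integers $1\leqslant k\leqslant d$, two standard boxes $K,L\subset\mathbb{R}^d$ are $k$-neighborly if $d-k\leqslant \dim(K\cap L)\leqslant d-1$, and a family of standard boxes is $k$-neighborly if every two distinct members are $k$-neighborly. $n(k,d)$ denotes the maximum possible cardinality of a $k$-neighborly family of standard boxes in $\mathbb{R}^d$. *)

From HB Require Import structures.
From mathcomp Require Import all_boot all_order all_algebra.
From mathcomp Require Import Rstruct.
Set Implicit Arguments. Unset Strict Implicit. Unset Printing Implicit Defensive.
Import Order.TTheory GRing.Theory Num.Theory.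
Local Open Scope ring_scope.

Record box (d : nat) := Box {
  lo : 'I_d -> Rdefinitions.R;
  hi : 'I_d -> Rdefinitions.R;
  lo_lt_hi : forall i, lo i < hi i }.

(* K ∩ L is the box prod_i [max(lo), min(hi)], nonempty iff max lo <= min hi
   for every i; its dimension is the number of coordinates where the
   intersection interval has positive length. *)
Definition inter_nonempty d (K L : box d) : Prop :=
  forall i : 'I_d, Num.max (lo K i) (lo L i) <= Num.min (hi K i) (hi L i).

Definition inter_dim d (K L : box d) : nat :=
  #|[set i : 'I_d | Num.max (lo K i) (lo L i) < Num.min (hi K i) (hi L i)]|.

(* K, L are k-neighborly: d - k <= dim (K ∩ L) <= d - 1 (in particular K ∩ L
   is nonempty, as the empty set has dimension -1). *)
Definition neighborly (k d : nat) (K L : box d) : Prop :=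
  inter_nonempty K L /\ (d - k <= inter_dim K L)%N /\ (inter_dim K L <= d - 1)%N.

(* A k-neighborly family of m standard boxes in R^d: m boxes, any two distinct
   members k-neighborly.  (Pairwise neighborliness forces the F i to be
   pairwise distinct, since dim (K ∩ K) = d.) *)
Definition neighborly_family (k d m : nat) : Prop :=
  exists F : 'I_m -> box d, forall i j : 'I_m, i != j -> @neighborly k d (F i) (F j).

Definition is_n (k d N : nat) : Prop :=
  neighborly_family k d N /\ (forall m, neighborly_family k d m -> (m <= N)%N).

From mathcomp Require Import all_boot.
From HB Require Import structures.
From mathcomp Require Import all_order all_algebra Rstruct lra zify.
Set Implicit Arguments. Unset Strict Implicit. Unset Printing Implicit Defensive.
Import Order.TTheory GRing.Theory Num.Theory.

(* Lower bound: give each coordinate of a box one of the sides [-1,0], [0,1]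
   or [-1,1].  Two such boxes always meet, and they are (d-1)-neighborly as
   soon as their sides have disjoint interiors ("conflict") in some
   coordinate but not in all of them.  The heads (-,-), (-,+), (+,[-1,1]) on
   the first two coordinates pairwise conflict yet always agree somewhere;
   followed by an arbitrary tail of d-2 signs they give 3 * 2^(d-2) boxes.

   Upper bound: pairwise intersecting boxes share a point p.  Each box K meets
   a nonempty set S(K) of the 2^d closed orthants at p in a full-dimensional
   set, and dim (K ∩ L) < d makes S(K) and S(L) disjoint.  If S(K) is a single
   orthant then K lies inside it; boxes inside opposite orthants meet in
   dimension 0, so the set A of such orthants contains no opposite pair and
   |A| <= 2^(d-1).  As |S(K)| + |S(K) ∩ A| >= 2 for every K,
   2m <= 2^d + |A| <= 3 * 2^(d-1). *)

Local Notation R := Rdefinitions.R.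

Lemma sum_card_setI_le (I T : finType) (S : I -> {set T}) (B : {set T}) :
  (forall i j, i != j -> [disjoint S i & S j]) -> (\sum_i #|S i :&: B| <= #|B|)%N.
Proof.
move=> disjS; have disjSB i j : i != j -> [disjoint S i :&: B & S j :&: B].
  move=> ij; rewrite disjoint_sym; apply: disjointWl (subsetIl _ _) _.
  by rewrite disjoint_sym; apply: disjointWl (subsetIl _ _) (disjS _ _ ij).
rewrite -(eq_bigr _ (fun i _ => sum1_card _)).
rewrite -(partition_disjoint_bigcup _ _ disjSB) sum1_card.
by apply/subset_leq_card/bigcupsP => i _; apply: subsetIr.
Qed.

Lemma card_disjoint_image (T : finType) (f : T -> T) (A : {set T}) :
  injective f -> [disjoint A & f @: A] -> (2 * #|A| <= #|T|)%N.
Proof.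
move=> f_inj disjA; have := max_card (A :|: f @: A).
by rewrite cardsU (disjoint_setI0 disjA) cards0 subn0 card_imset // addnn -mul2n.
Qed.

Section BoxIntersections.
Local Open Scope ring_scope.
Variable d : nat.
Implicit Types (K L : box d) (p : 'I_d -> R).

Definition in_box p K := forall i, lo K i <= p i <= hi K i.

Lemma inter_nonempty_lo_le_hi K L i : inter_nonempty K L -> lo K i <= hi L i.
Proof. by move/(_ i); rewrite ge_max !le_min => /andP[/andP[_ ->]]. Qed.

Lemma inter_dim_self K : inter_dim K K = d.
Proof.
rewrite -[RHS]card_ord -cardsT; apply: eq_card => i.
by rewrite !inE maxxx minxx lo_lt_hi.
Qed.

Lemma inter_dim_lt_degenerate K L : (inter_dim K L < d)%N ->
  exists i, Num.min (hi K i) (hi L i) <= Num.max (lo K i) (lo L i).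
Proof.
move=> dimKL; apply/existsP; apply: contraTT dimKL => /existsPn nondeg.
rewrite -leqNgt -[X in (X <= _)%N]card_ord -cardsT subset_leq_card //.
by apply/subsetP => i _; rewrite inE ltNge nondeg.
Qed.

Lemma neighborly_inter_dim K L : (0 < d)%N ->
  @neighborly (d - 1) d K L -> (0 < inter_dim K L < d)%N.
Proof. by move=> d_gt0 [_ [lb ub]]; apply/andP; split; lia. Qed.

Lemma common_point_of_pairwise_meeting (I : finType) (F : I -> box d) :
  (forall j k, j != k -> inter_nonempty (F j) (F k)) ->
  exists p, forall j, in_box p (F j).
Proof.
move=> meetF; have lo_le_hi j k i : lo (F j) i <= hi (F k) i.
  have [->|jk] := eqVneq j k; first exact/ltW/lo_lt_hi.
  exact: inter_nonempty_lo_le_hi (meetF _ _ jk).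
case: (pickP (fun _ : I => true)) => [j0 _|I0]; last first.
  by exists (fun=> 0) => j; have := I0 j.
exists (fun i => \big[Num.max/lo (F j0) i]_j lo (F j) i) => j i.
apply/andP; split; first by rewrite (bigD1 j) //= le_max lexx.
by elim/big_ind: _ => [|x y|k _]; rewrite ?ge_max => //= -> ->.
Qed.

End BoxIntersections.

Section Orthants.
Local Open Scope ring_scope.
Variables (d : nat) (p : 'I_d -> R).
Implicit Types (K L : box d) (x : {ffun 'I_d -> bool}).

(* A sign vector x names the closed orthant at p lying above p exactly in the
   coordinates where x is true; [touched_orthants K] collects the orthants
   that K meets in a full-dimensional set. *)
Definition touched_orthants K : {set {ffun 'I_d -> bool}} :=
  [set x : {ffun 'I_d -> bool} | [forall i, if x i then p i < hi K i else lo K i < p i]].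

Definition inside_orthant K x : bool :=
  [forall i, if x i then p i <= lo K i else hi K i <= p i].

Definition flip x : {ffun 'I_d -> bool} := [ffun i => ~~ x i].

Lemma flipK : involutive flip.
Proof. by move=> x; apply/ffunP => i; rewrite !ffunE negbK. Qed.

Lemma touched_orthants_neq0 K : touched_orthants K != set0.
Proof.
apply/set0Pn; exists [ffun i => p i < hi K i]; rewrite inE; apply/forallP => i.
rewrite ffunE; case: ltP => // hi_le_p.
exact: lt_le_trans (lo_lt_hi K i) hi_le_p.
Qed.

Lemma inside_orthant_touched K x :
  inside_orthant K x -> x \in touched_orthants K.
Proof.
move=> /forallP insideK; rewrite inE; apply/forallP => i.
have := insideK i; have := lo_lt_hi K i; case: (x i) => /=; lra.
Qed.

Lemma touched_orthants1 K x :
  touched_orthants K = [set x] -> inside_orthant K x.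
Proof.
move=> Kx; have : x \in touched_orthants K by rewrite Kx set11.
rewrite inE => /forallP touchK.
apply/forallP => i; pose y := [ffun k => if k == i then ~~ x i else x k].
have : y \notin touched_orthants K.
  rewrite Kx in_set1; apply/eqP => /ffunP/(_ i).
  by rewrite ffunE eqxx; case: (x i).
apply: contraNT => not_inside; rewrite inE; apply/forallP => k; rewrite ffunE.
have [->|_] := eqVneq k i; last exact: touchK.
by case: (x i) not_inside => /=; rewrite ltNge.
Qed.

Lemma touched_orthants_disjoint K L : in_box p K -> in_box p L ->
  (inter_dim K L < d)%N -> [disjoint touched_orthants K & touched_orthants L].
Proof.
move=> pK pL /inter_dim_lt_degenerate[i degenerate].
rewrite -setI_eq0; apply/eqP/setP => x; rewrite !inE; apply/negbTE.
apply/negP => /andP[/forallP/(_ i) xK /forallP/(_ i) xL].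
move: degenerate; apply/negP; rewrite -ltNge gt_max !lt_min.
have /andP[? ?] := pK i; have /andP[? ?] := pL i.
by case: (x i) xK xL => /= ? ?; apply/andP; split; apply/andP; split; lra.
Qed.

Lemma inside_flip_inter_dim K L x :
  inside_orthant K x -> inside_orthant L (flip x) -> inter_dim K L = 0%N.
Proof.
move=> /forallP insideK /forallP insideL; apply/eqP; rewrite cards_eq0.
apply/eqP/setP => i; rewrite !inE; apply/negbTE.
rewrite -leNgt le_max !ge_min.
have := insideK i; have := insideL i; rewrite ffunE.
by case: (x i) => /= ? ?; apply/orP;
  [left; apply/orP; right | right; apply/orP; left]; lra.
Qed.

End Orthants.

Section UpperBound.
Local Open Scope ring_scope.
Variables (d m : nat) (F : 'I_m -> box d) (p : 'I_d -> R).
Hypothesis d_gt0 : (0 < d)%N.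
Hypothesis neighborlyF : forall j k, j != k -> @neighborly (d - 1) d (F j) (F k).
Hypothesis p_in_F : forall j, in_box p (F j).

Let S j := touched_orthants p (F j).

Definition corner_orthants : {set {ffun 'I_d -> bool}} :=
  [set x : {ffun 'I_d -> bool} | [exists j, inside_orthant p (F j) x]].

Lemma touched_orthants_pairwise_disjoint j k : j != k -> [disjoint S j & S k].
Proof.
move=> jk; have /andP[_ dim_lt] := neighborly_inter_dim d_gt0 (neighborlyF jk).
exact: touched_orthants_disjoint.
Qed.

Lemma corner_orthants_flip_disjoint :
  [disjoint corner_orthants & [set flip x | x in corner_orthants]].
Proof.
rewrite -setI_eq0; apply/eqP/setP => x; rewrite !inE; apply/negbTE/negP.
case/andP=> /existsP[j insidej] /imsetP[y /[!inE] /existsP[k insidek] xE].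
rewrite {x}xE in insidej; have kj : k != j.
  apply: contra_eqN (inter_dim_self (F k)) => /eqP kj; subst j.
  by rewrite (inside_flip_inter_dim insidek insidej); lia.
have /andP[dim_gt0 _] := neighborly_inter_dim d_gt0 (neighborlyF kj).
by rewrite (inside_flip_inter_dim insidek insidej) in dim_gt0.
Qed.

Lemma card_touched_corner_ge2 j : (2 <= #|S j| + #|S j :&: corner_orthants|)%N.
Proof.
have : (0 < #|S j|)%N by rewrite card_gt0 touched_orthants_neq0.
have [/eqP/cards1P[x Sx] _|] := eqVneq #|S j| 1%N; last lia.
suff : (0 < #|S j :&: corner_orthants|)%N by rewrite Sx cards1; lia.
apply/card_gt0P; exists x; rewrite inE Sx set11 inE.
by apply/existsP; exists j; apply: touched_orthants1.
Qed.

Lemma card_neighborly_boxes_le : (2 * m <= 3 * 2 ^ d.-1)%N.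
Proof.
have sum_le B : (\sum_j #|S j :&: B| <= #|B|)%N.
  exact/sum_card_setI_le/touched_orthants_pairwise_disjoint.
have card_signs : #|{ffun 'I_d -> bool}| = (2 * 2 ^ d.-1)%N.
  by rewrite card_ffun card_bool card_ord -expnS (prednK d_gt0).
have flip_inj : injective (@flip d) by apply: inv_inj; apply: flipK.
have := card_disjoint_image flip_inj corner_orthants_flip_disjoint.
rewrite card_signs => corners_le.
have two_le : (2 * m <= \sum_j #|S j :&: setT| + \sum_j #|S j :&: corner_orthants|)%N.
  rewrite -big_split /= mulnC -[X in (X * _)%N]card_ord -sum_nat_const.
  by apply: leq_sum => j _; rewrite setIT card_touched_corner_ge2.
apply: leq_trans two_le _.
apply: leq_trans (leq_add (sum_le setT) (sum_le corner_orthants)) _.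
by rewrite cardsT card_signs mulSn addnC leq_add2r -(leq_pmul2l (isT : (0 < 2)%N)).
Qed.

End UpperBound.

Lemma neighborly_family_le d m : (0 < d)%N ->
  neighborly_family (d - 1) d m -> (2 * m <= 3 * 2 ^ d.-1)%N.
Proof.
move=> d_gt0 [F neighborlyF].
have [p p_in_F] :=
  common_point_of_pairwise_meeting (fun j k jk => (neighborlyF j k jk).1).
exact: card_neighborly_boxes_le p_in_F.
Qed.

Section SignPatternBoxes.
Local Open Scope ring_scope.

Definition side_lo (c : option bool) : R := if c is Some true then 0 else -1.
Definition side_hi (c : option bool) : R := if c is Some false then 0 else 1.

Definition conflict (c c' : option bool) : bool :=
  if (c, c') is (Some b, Some b') then b != b' else false.

Lemma side_lo_lt_hi c : side_lo c < side_hi c.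
Proof. by case: c => [[]|] /=; lra. Qed.

Lemma side_max_le_min c c' :
  Num.max (side_lo c) (side_lo c') <= Num.min (side_hi c) (side_hi c').
Proof.
rewrite ge_max !le_min.
by case: c => [[]|]; case: c' => [[]|] /=; apply/andP; split; apply/andP; split; lra.
Qed.

Lemma side_max_lt_min c c' :
  (Num.max (side_lo c) (side_lo c') < Num.min (side_hi c) (side_hi c')) =
  ~~ conflict c c'.
Proof.
rewrite gt_max !lt_min.
by case: c => [[]|]; case: c' => [[]|] /=;
  rewrite ?ltxx ?andbF ?andFb ?ltr01 ?ltrN10 //; lra.
Qed.

Variable d : nat.
Implicit Types u v : 'I_d -> option bool.

Definition pattern_box u : box d :=
  @Box d (fun i => side_lo (u i)) (fun i => side_hi (u i)) (fun i => side_lo_lt_hi (u i)).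

Lemma inter_dim_pattern_box u v :
  inter_dim (pattern_box u) (pattern_box v) = #|[set i | ~~ conflict (u i) (v i)]|.
Proof. by apply: eq_card => i; rewrite !inE side_max_lt_min. Qed.

Lemma pattern_box_neighborly u v :
  (exists i, conflict (u i) (v i)) -> (exists i, ~~ conflict (u i) (v i)) ->
  @neighborly (d - 1) d (pattern_box u) (pattern_box v).
Proof.
move=> [i uvi] [j uvj]; split; first by move=> k; apply: side_max_le_min.
rewrite inter_dim_pattern_box; split.
  suff : (0 < #|[set i | ~~ conflict (u i) (v i)]|)%N by lia.
  by apply/card_gt0P; exists j; rewrite inE.
have : [set k | ~~ conflict (u k) (v k)] \subset [set~ i].
  by apply/subsetP => k; rewrite !inE; apply: contra => /eqP ->.
by move/subset_leq_card; rewrite cardsC1 card_ord subn1.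
Qed.

Lemma neighborly_family_of_patterns (I : finType) (u : I -> 'I_d -> option bool) :
  (forall s t, s != t -> exists i, conflict (u s i) (u t i)) ->
  (forall s t, exists i, ~~ conflict (u s i) (u t i)) ->
  neighborly_family (d - 1) d #|I|.
Proof.
move=> conflictu compatu; exists (fun j => pattern_box (u (enum_val j))) => j k jk.
apply: pattern_box_neighborly (compatu _ _); apply: conflictu.
by apply: contra jk => /eqP/enum_val_inj ->.
Qed.

End SignPatternBoxes.

Section Codewords.
Variable n : nat.
Implicit Types (a b : 'I_3) (s t : 'I_3 * {ffun 'I_n -> bool}).

Definition head_pattern a (h : 'I_2) : option bool :=
  match val a, val h with
  | 0, _ => Some false
  | 1, 0 => Some false
  | 1, _ => Some true
  | _, 0 => Some true
  | _, _ => None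
  end.

Definition codeword t (i : 'I_(2 + n)) : option bool :=
  match split i with inl h => head_pattern t.1 h | inr k => Some (t.2 k) end.

Lemma head_pattern_conflict a b :
  a != b -> exists h, conflict (head_pattern a h) (head_pattern b h).
Proof.
case: a b => [[|[|[|a]]] ha] [[|[|[|b]]] hb] //= ab;
  try by rewrite (bool_irrelevance ha hb) eqxx in ab.
all: first [by exists ord0 | by exists ord_max].
Qed.

Lemma head_pattern_compatible a b :
  exists h, ~~ conflict (head_pattern a h) (head_pattern b h).
Proof.
case: a b => [[|[|[|a]]] ha] [[|[|[|b]]] hb] //=.
all: first [by exists ord0 | by exists ord_max].
Qed.

Lemma codeword_lshift t h : codeword t (lshift n h) = head_pattern t.1 h.
Proof. by rewrite /codeword (unsplitK (inl _)). Qed.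

Lemma codeword_rshift t k : codeword t (rshift 2 k) = Some (t.2 k).
Proof. by rewrite /codeword (unsplitK (inr _)). Qed.

Lemma codeword_conflict s t :
  s != t -> exists i, conflict (codeword s i) (codeword t i).
Proof.
case: s t => [a f] [b g] /=; have [<- fg|ab _] := eqVneq a b; last first.
  have [h abh] := head_pattern_conflict ab.
  by exists (lshift n h); rewrite !codeword_lshift.
have [k fgk] : exists k, f k != g k.
  apply/existsP; rewrite -negb_forall; apply: contra fg => /forallP fg.
  by apply/eqP; congr (_, _); apply/ffunP => k; apply/eqP.
by exists (rshift 2 k); rewrite !codeword_rshift.
Qed.

Lemma codeword_compatible s t :
  exists i, ~~ conflict (codeword s i) (codeword t i).
Proof.
have [h st] := head_pattern_compatible s.1 t.1.
by exists (lshift n h); rewrite !codeword_lshift.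
Qed.

Lemma neighborly_family_codewords : neighborly_family n.+1 n.+2 (3 * 2 ^ n).
Proof.
have := neighborly_family_of_patterns codeword_conflict codeword_compatible.
by rewrite card_prod card_ord card_ffun card_bool card_ord.
Qed.

End Codewords.

Theorem proposition1 (d : nat) : (2 <= d)%N -> is_n (d - 1) d (3 * 2 ^ (d - 2)).
Proof.
case: d => [|[|n]] // _; rewrite !subSS !subn0; split.
  exact: neighborly_family_codewords.
move=> m /(neighborly_family_le (ltn0Sn _)); rewrite expnS; lia.
Qed.
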